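(* Let $K=3$ and let $l\ge m>0$ be integers. Then \[ h(l,\,m,\,0)\ \le\ h(l-1,\,m-1,\,1)+1. \]
   Context: For a vector $\vec n=(n_1,n_2,n_3)$ of nonnegative integers, the following random process is run: stocks start at $\vec n^{(0)}=\vec n$; at each step $t=1,2,\dots$, as long as at least two coordinates of $\vec n^{(t-1)}$ are nonzero, an index $i$ is chosen uniformly at random (independently of the past) among the indices with $n_i^{(t-1)}>0$, and $\vec n^{(t)}=\vec n^{(t-1)}-\vec e_i$ ($\vec e_i$ the $i$-th standard unit vector). The process stops at the first time $T$ at which at most one coordinate is nonzero, and $h(\vec n)=\mathbb{E}[T]$. Equivalently, with $\operatorname{support}(\vec n)=\{i:n_i\ne 0\}$: $h(\vec n)=0$ if $|\operatorname{support}(\vec n)|\le1$, and otherwise $h(\vec n)=1+\frac{1}{|\operatorname{support}(\vec n)|}\sum_{i\in\operatorname{support}(\vec n)}h(\vec n-\vec e_i)$. *)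

From mathcomp Require Import all_boot all_order all_algebra.
Set Implicit Arguments. Unset Strict Implicit. Unset Printing Implicit Defensive.
Import Order.TTheory GRing.Theory Num.Theory.
Local Open Scope ring_scope.

Definition supp_size (n1 n2 n3 : nat) : nat :=
  ((n1 != 0%N) + (n2 != 0%N) + (n3 != 0%N))%N.

(* The fuel k is the total stock n1+n2+n3, which decreases by one per step. *)
Fixpoint h_fuel (k : nat) (n1 n2 n3 : nat) : rat :=
  match k with
  | 0%N => 0
  | k'.+1 =>
    let s := supp_size n1 n2 n3 in
    if (s <= 1)%N then 0
    else 1 + (s%:R)^-1 *
      ((if n1 != 0%N then h_fuel k' n1.-1 n2 n3 else 0)
     + (if n2 != 0%N then h_fuel k' n1 n2.-1 n3 else 0)
     + (if n3 != 0%N then h_fuel k' n1 n2 n3.-1 else 0))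
  end.

(* h(n1,n2,n3) = expected stopping time of the process (K = 3). *)
Definition h (n1 n2 n3 : nat) : rat := h_fuel (n1 + n2 + n3) n1 n2 n3.

(* Writing f(a,b) = h(a,b,0)
   for the two-stock process, f satisfies f(a+1,b) + f(a,b+1) <= 2 + 2 f(a,b)
   (double induction, unfolding the recursion at the three points involved).
   The theorem then follows by double induction on (l,m): h(l,m,0) is one plus
   an average of two values and h(l-1,m-1,1) one plus an average of three; the
   induction hypotheses bound the two former by two of the latter, and the
   bound on f at (l-1,m-1) accounts for the third, h(l-1,m-1,0). *)
From mathcomp Require Import all_boot all_order all_algebra.
From mathcomp Require Import lra.
Import Order.TTheory GRing.Theory Num.Theory.
Local Open Scope ring_scope.

Lemma hE a b c : h a b c =
  if (supp_size a b c <= 1)%N then 0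
  else 1 + ((supp_size a b c)%:R)^-1 *
      ((if a != 0%N then h a.-1 b c else 0)
     + (if b != 0%N then h a b.-1 c else 0)
     + (if c != 0%N then h a b c.-1 else 0)).
Proof.
rewrite /h; case E: (a + b + c)%N => [|k].
  by move: E; case: a => [|a] //; case: b => [|b] //; case: c.
rewrite /=; case: ifP => // _.
congr (_ + _ * (_ + _ + _)).
- by case: a E => [|a] //= E; rewrite -[k]/(k.+1.-1) -E.
- by case: b E => [|b] //= E; rewrite -[k]/(k.+1.-1) -E addnS.
- by case: c E => [|c] //= E; rewrite -[k]/(k.+1.-1) -E addnS.
Qed.

Lemma h_ge0 a b c : 0 <= h a b c.
Proof.
rewrite /h; move: (a + b + c)%N => k.
elim: k a b c => [|k IH] a b c //=.
case: ifP => // _; rewrite addr_ge0 // mulr_ge0 ?invr_ge0 //.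
by rewrite !addr_ge0 //; case: ifP.
Qed.

Lemma h_fuelC12 k a b c : h_fuel k a b c = h_fuel k b a c.
Proof.
elim: k a b c => [|k IH] a b c //=.
rewrite /supp_size [((b != 0) + (a != 0))%N]addnC.
rewrite [in RHS](addrC (if b != 0%N then _ else _)).
by congr (if _ then _ else 1 + _ * (_ + _ + _)); case: ifP => // _; apply: IH.
Qed.

Lemma h_fuelC23 k a b c : h_fuel k a b c = h_fuel k a c b.
Proof.
elim: k a b c => [|k IH] a b c //=.
rewrite /supp_size -!addnA [((c != 0) + (b != 0))%N]addnC.
rewrite [in RHS]addrAC.
by congr (if _ then _ else 1 + _ * (_ + _ + _)); case: ifP => // _; apply: IH.
Qed.

Lemma hC12 a b c : h a b c = h b a c.
Proof. by rewrite /h h_fuelC12 [(a + b)%N]addnC. Qed.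

Lemma hC23 a b c : h a b c = h a c b.
Proof. by rewrite /h h_fuelC23 addnAC. Qed.

Lemma h0n0 b : h 0 b 0 = 0.
Proof. by rewrite hE /supp_size; case: b. Qed.

Lemma hn00 a : h a 0 0 = 0.
Proof. by rewrite hC12 h0n0. Qed.

Lemma hSS0 a b : h a.+1 b.+1 0 = 1 + (h a b.+1 0 + h a.+1 b 0) / 2.
Proof. by rewrite hE /= addr0 mulrC. Qed.

Lemma hSS1 a b :
  h a.+1 b.+1 1 = 1 + (h a b.+1 1 + h a.+1 b 1 + h a.+1 b.+1 0) / 3.
Proof. by rewrite hE /= mulrC. Qed.

Lemma hn10_le2 a : h a 1 0 <= 2.
Proof. by elim: a => [|a IH]; rewrite ?h0n0 // hSS0 hn00; lra. Qed.

Lemma h_neighbours_le a b : h a.+1 b 0 + h a b.+1 0 <= 2 + 2 * h a b 0.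
Proof.
elim: a b => [|a IHa] b.
  by rewrite !h0n0 hC12; have := hn10_le2 b; lra.
elim: b => [|b IHb].
  by rewrite !hn00; have := hn10_le2 a.+1; lra.
rewrite (hSS0 a.+1 b) (hSS0 a b.+1).
by have := hSS0 a b; have := IHa b.+1; have := IHb; lra.
Qed.

Lemma hSS0_le i j : h i.+1 j.+1 0 <= h i j 1 + 1.
Proof.
elim: i j => [|i IHi] j.
  rewrite (hC23 0 j) (hC12 0 1) (hC23 1 0) hSS0 h0n0.
  by have := h_ge0 1 j 0; lra.
elim: j => [|j IHj].
  by rewrite (hC23 i.+1 0) hSS0 hn00; have := h_ge0 i.+1 1 0; lra.
rewrite hSS1 (hSS0 i.+1 j.+1).
by have := IHi j.+1; have := IHj; have := h_neighbours_le i.+1 j.+1; lra.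
Qed.

Theorem lemma8 (l m : nat) (hlm : (m <= l)%N) (hm : (0 < m)%N) :
  h l m 0 <= h l.-1 m.-1 1 + 1.
Proof.
case: l hlm => [|l]; first by case: m hm.
by case: m hm => [|m] // _ _; apply: hSS0_le.
Qed.
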